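(* Consider a two-class problem with $p$ real-valued features, $p$ fixed. For $i=1,\ldots,n$ the observations $X_i=(X_{i1},\ldots,X_{ip})$ come from class $0$ and for $i=n+1,\ldots,n+m$ they come from class $1$. For feature $j$, let $f_j$ and $g_j$ be its marginal densities in class $0$ and class $1$. The features are independent, and every feature satisfies the regularity conditions of the leave-one-out average log-Bayes factor framework described in the context. Let $ALB_j$ be the average log-Bayes factor statistic of feature $j$ defined in the context. Let $D=\{j: f_j\not\equiv g_j\}$ be the set of informative features and $D^c$ its complement in $\{1,\ldots,p\}$. Then, as $n,m\to\infty$, $$P\Big(\max_{i\in D^c} ALB_i<\min_{j\in D} ALB_j\Big)\to 1,$$ and, when $0$ is used as the screening cutoff, $$P\Big(\min_{j\in D} ALB_j>0\ \text{ and }\ \max_{j\in D^c} ALB_j<0\Big)\to 1.$$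
   Context: Notation: $\mathbf X_j=(X_{1j},\ldots,X_{(n+m)j})$ is the vector of all observations of feature $j$. $K$ is a kernel, taken to be the Hall kernel $$K(z)=\frac{1}{\sqrt{8\pi e}\,\Phi(1)}\exp\!\big[-\tfrac12(\log(1+|z|))^2\big].$$ The bandwidth for feature $j$ is the plug-in rule $b=0.162\,(m+n)^{-1/5}s_j$, where $s_j=\mathrm{IQR}(\mathbf X_j)/1.35$. Leave-one-out kernel density estimates, each omitting observation $i$: - pooled: $\hat h_i(x)=\frac{1}{(n+m-1)b}\sum_{r\le n+m,\ r\ne i}K\!\big(\frac{x-X_{rj}}{b}\big)$; - class $0$: $\hat f_i(x)=\frac{1}{(n-1)b}\sum_{r\le n,\ r\ne i}K\!\big(\frac{x-X_{rj}}{b}\big)$; - class $1$: $\hat g_i(x)=\frac{1}{(m-1)b}\sum_{n<r\le n+m,\ r\ne i}K\!\big(\frac{x-X_{rj}}{b}\big)$. The statistic is $$(m+n)\,ALB_j=\sum_{i=n+1}^{n+m}\log\frac{\hat g_i(X_{ij})}{\hat h_i(X_{ij})}+\sum_{i=1}^{n}\log\frac{\hat f_i(X_{ij})}{\hat h_i(X_{ij})}.$$ Standing regularity assumption: the paper requires each feature to satisfy conditions A1–A5 of an earlier paper on leave-one-out average log-Bayes factor two-sample tests. Those conditions are regularity conditions on the densities, kernel and bandwidth. Under them, for each fixed feature $j$, as $n,m\to\infty$: $P(ALB_j<0)\to1$ if $f_j\equiv g_j$, and $P(ALB_j>0)\to1$ if $f_j\not\equiv g_j$. *)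

From HB Require Import structures.
From mathcomp Require Import all_boot all_order all_algebra.
From mathcomp Require Import all_classical all_reals all_analysis.
Set Implicit Arguments. Unset Strict Implicit. Unset Printing Implicit Defensive.
Import Order.TTheory GRing.Theory Num.Theory.
Import numFieldNormedType.Exports.
Local Open Scope classical_set_scope.
Local Open Scope ring_scope.

Section Defs.
Variable R : realType.

Definition Phi1 : R :=
  (Num.sqrt (2 * pi))^-1 *
  fine (\int[@lebesgue_measure R]_(t in `]-oo, 1%R]) (expR (- (t ^+ 2) / 2))%:E).

Definition hall_kernel (z : R) : R :=
  (Num.sqrt (8 * pi * expR 1) * Phi1)^-1 *
  expR (- (1 / 2) * (ln (1 + `|z|)) ^+ 2).

(* Empirical quantile of level a/b (type 1: the ceil(N a/b)-th order
   statistic, at least the first) *)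
Definition emp_quantile (s : seq R) (a b : nat) : R :=
  nth 0 (sort (fun x y : R => x <= y) s) ((a * size s + b - 1) %/ b).-1.

Definition emp_IQR (s : seq R) : R := emp_quantile s 3 4 - emp_quantile s 1 4.

(* data vector x_0,...,x_{N-1}, N = n+m, class 0 = indices < n *)
Definition bandwidth (n m : nat) (x : nat -> R) : R :=
  let N := (n + m)%N in
  (162%:R / 1000%:R) * (N%:R `^ (- (5%:R)^-1)) * (emp_IQR [seq x r | r <- iota 0 N] / (135%:R / 100%:R)).

Definition kde_pool (n m : nat) (x : nat -> R) (i : nat) (y : R) : R :=
  let b := bandwidth n m x in
  (((n + m).-1)%:R * b)^-1 *
  \sum_(0 <= r < n + m | r != i) hall_kernel ((y - x r) / b).

Definition kde0 (n m : nat) (x : nat -> R) (i : nat) (y : R) : R :=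
  let b := bandwidth n m x in
  ((n.-1)%:R * b)^-1 * \sum_(0 <= r < n | r != i) hall_kernel ((y - x r) / b).

Definition kde1 (n m : nat) (x : nat -> R) (i : nat) (y : R) : R :=
  let b := bandwidth n m x in
  ((m.-1)%:R * b)^-1 *
  \sum_(n <= r < n + m | r != i) hall_kernel ((y - x r) / b).

(* the ALB statistic (divided by n+m) *)
Definition ALB_stat (n m : nat) (x : nat -> R) : R :=
  ((n + m)%:R)^-1 *
  (\sum_(n <= i < n + m) ln (kde1 n m x i (x i) / kde_pool n m x i (x i)) +
   \sum_(0 <= i < n) ln (kde0 n m x i (x i) / kde_pool n m x i (x i))).

End Defs.

(* observations: X0 r j = feature j of the r-th class-0 observation,
   X1 r j = feature j of the r-th class-1 observation.  With sample sizes
   n, m we use the first n of class 0 (indices 0..n-1) and the first m of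
   class 1 (indices n..n+m-1). *)
Definition feature_data {R : realType} {T : Type} {p : nat}
  (X0 X1 : nat -> 'I_p -> T -> R) (n : nat) (j : 'I_p) (w : T) : nat -> R :=
  fun r => if (r < n)%N then X0 r j w else X1 (r - n)%N j w.

Definition ALB {R : realType} {T : Type} {p : nat}
  (X0 X1 : nat -> 'I_p -> T -> R) (n m : nat) (j : 'I_p) (w : T) : R :=
  ALB_stat n m (feature_data X0 X1 n j w).

Definition mutually_independent {d} {T : measurableType d} {R : realType}
  (P : probability T R) {I : eqType} (Y : I -> T -> R) : Prop :=
  forall (s : seq I) (A : I -> set R), uniq s ->
    (forall i, measurable (A i)) ->
    P (\bigcap_(i in [set` s]) (Y i @^-1` A i)) =
    (\big[*%E/1%E]_(i <- s) P (Y i @^-1` A i))%E.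

Definition all_obs {R : realType} {T : Type} {p : nat}
  (X0 X1 : nat -> 'I_p -> T -> R) (k : bool * nat * 'I_p) : T -> R :=
  if k.1.1 then X1 k.1.2 k.2 else X0 k.1.2 k.2.

Definition has_density {d} {T : measurableType d} {R : realType}
  (P : probability T R) (X : T -> R) (f : R -> R) : Prop :=
  forall A : set R, measurable A ->
    P (X @^-1` A) = (\int[@lebesgue_measure R]_(x in A) (f x)%:E)%E.

Definition informative {R : realType} (f g : R -> R) : Prop :=
  ~ (ae_eq (@lebesgue_measure R) setT f g).

Definition tends_to_one {R : realType} (Pr : nat -> nat -> \bar R) : Prop :=
  forall eps : R, (0 < eps)%R -> exists N : nat,
    forall n m : nat, (N <= n)%N -> (N <= m)%N -> ((1 - eps)%:E <= Pr n m)%E.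

From HB Require Import structures.
From mathcomp Require Import all_boot all_order all_algebra.
From mathcomp Require Import all_classical all_reals all_analysis.
From mathcomp Require Import measurable_realfun lra.
Set Implicit Arguments. Unset Strict Implicit. Unset Printing Implicit Defensive.
Import Order.TTheory GRing.Theory Num.Theory.
Local Open Scope classical_set_scope.
Local Open Scope ring_scope.

(* The regularity hypothesis says that, for each single feature j,
   the event "ALB_j > 0 if j is informative, ALB_j < 0 otherwise" has
   probability tending to one.  There are only p features, so by the union
   bound all p events hold simultaneously with probability tending to one, and
   on their intersection every noise statistic is below 0 and hence below every
   informative one.  The only real work is to check that ALB_j is measurable
   (its bandwidth involves empirical quantiles, i.e. order statistics), so that
   these events have a probability at all. *)

Lemma measurable_funV d (T : measurableType d) (R : realType) (f : T -> R) :
  measurable_fun setT f -> measurable_fun setT (fun w => (f w)^-1).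
Proof.
apply: measurableT_comp.
have -> : [set: R] = [set~ 0] `|` [set 0].
  by apply/seteqP; split => x //= _; case: (eqVneq x 0) => [->|/eqP ?]; [right|left].
apply/(measurable_funU _ (measurableC (measurable_set1 0)) (measurable_set1 0)).
split; last exact: measurable_fun_set1.
apply: open_continuous_measurable_fun.
  by rewrite openC; apply/accessible_closed_set1/hausdorff_accessible/norm_hausdorff.
by move=> x; rewrite inE /= => /eqP x0; apply: inv_continuous.
Qed.

Lemma sorted_nth_lt_count (R : realDomainType) (x0 c : R) (t : seq R) (k : nat) :
  sorted <=%R t -> (k < size t)%N ->
  (nth x0 t k < c) = (k < count (fun y : R => (y < c)%R) t)%N.
Proof.
elim: t k => [//|x t IH] k /= x_t.
have x_le : all (fun y => x <= y) t by apply: order_path_min x_t; exact: le_trans.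
have count0 : c <= x -> count (fun y : R => (y < c)%R) t = 0%N.
  move=> cx; apply/eqP; rewrite -leqn0 leqNgt -has_count; apply/hasPn => y yt.
  by rewrite -leNgt (le_trans cx) //; move/allP: x_le; apply.
case: k => [_|k] /=.
  by case: ltP => xc; rewrite ?add1n // add0n count0.
rewrite ltnS => kt; case: (ltP x c) => xc.
  by rewrite add1n ltnS IH //; exact: path_sorted x_t.
rewrite add0n count0 // ltn0; apply/negbTE; rewrite -leNgt (le_trans xc) //.
by move/all_nthP: x_le; apply.
Qed.

Section measurable_statistic.
Context d (T : measurableType d) (R : realType).
Variable x : nat -> T -> R.
Hypothesis mx : forall r, measurable_fun setT (x r).

Lemma measurable_count_lt (s : seq nat) (c : R) :
  measurable_fun setT (fun w => (count (fun y : R => (y < c)%R) [seq x r w | r <- s])%:R : R).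
Proof.
have -> : (fun w => (count (fun y : R => (y < c)%R) [seq x r w | r <- s])%:R : R) =
          (fun w => \sum_(r <- s) (if x r w < c then 1 else 0)).
  apply/funext => w; elim: s => [|r s IH] /=; first by rewrite big_nil.
  by rewrite big_cons natrD IH; case: ifP.
apply: measurable_sum => r; apply: measurable_fun_ifT => //.
exact: measurable_fun_ltr.
Qed.

Lemma measurable_nth_sort (s : seq nat) (k : nat) :
  measurable_fun setT (fun w => nth 0 (sort <=%R [seq x r w | r <- s]) k).
Proof.
have [ks|sk] := ltnP k (size s); last first.
  rewrite (_ : (fun w => _) = fun=> 0); first exact: measurable_cst.
  by apply/funext => w; rewrite nth_default // size_sort size_map.
apply: (measurability _ (RGenInftyO.measurableE R)).
move=> _ [_ [c ->] <-].
(* the k-th order statistic is below c iff more than k of the values are *)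
suff -> : setT `&` (fun w => nth 0 (sort <=%R [seq x r w | r <- s]) k) @^-1` `]-oo, c[ =
    setT `&` (fun w => (count (fun y : R => (y < c)%R) [seq x r w | r <- s])%:R : R) @^-1`
      `]k%:R, +oo[ by exact: measurable_count_lt.
apply/seteqP; split => w /= [_]; rewrite !in_itv /= ?andbT ltr_nat => h; split => //;
  by move: h; rewrite sorted_nth_lt_count ?count_sort ?sort_sorted ?size_sort ?size_map //;
     exact: le_total.
Qed.

Lemma measurable_hall_kernel : measurable_fun setT (@hall_kernel R).
Proof.
apply: measurable_funM => //.
apply: measurableT_comp; first exact: measurable_expR.
apply: measurable_funM => //.
apply/measurable_funX/measurableT_comp.
  exact: measurable_ln.
apply: measurable_funD => //.
Qed.

Lemma measurable_emp_quantile (s : seq nat) (a b : nat) :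
  measurable_fun setT (fun w => emp_quantile [seq x r w | r <- s] a b).
Proof.
by rewrite /emp_quantile; under eq_fun do rewrite size_map; exact: measurable_nth_sort.
Qed.

Lemma measurable_bandwidth (n m : nat) :
  measurable_fun setT (fun w => bandwidth n m (x^~ w)).
Proof.
apply: measurable_funM => //.
apply: measurable_funM => //.
by apply: measurable_funB; exact: measurable_emp_quantile.
Qed.

Lemma measurable_kernel_estimate (b : T -> R) (c : R) (s : seq nat) (P : pred nat)
    (i : nat) :
  measurable_fun setT b ->
  measurable_fun setT (fun w =>
    (c * b w)^-1 * \sum_(r <- s | P r) hall_kernel ((x i w - x r w) / b w)).
Proof.
move=> mb; apply: measurable_funM.
  by apply: measurable_funV; exact: measurable_funM.
under eq_fun do rewrite big_mkcond.
apply: measurable_sum => r; case: (P r) => //.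
apply: measurableT_comp measurable_hall_kernel _.
exact: measurable_funM (measurable_funB (mx i) (mx r)) (measurable_funV mb).
Qed.

Lemma measurable_ALB_stat (n m : nat) :
  measurable_fun setT (fun w => ALB_stat n m (x^~ w)).
Proof.
have mratio (f g : T -> R) : measurable_fun setT f -> measurable_fun setT g ->
    measurable_fun setT (fun w => ln (f w / g w)).
  move=> mf mg; apply: measurableT_comp; first exact: measurable_ln.
  by apply: measurable_funM mf (measurable_funV mg).
apply: measurable_funM => //.
apply: measurable_funD; apply: measurable_sum => i;
  apply: mratio; exact: measurable_kernel_estimate (measurable_bandwidth n m).
Qed.

End measurable_statistic.

Lemma measurable_ALB (R : realType) d (T : measurableType d) (p : nat)
    (X0 X1 : nat -> 'I_p -> T -> R) (n m : nat) (j : 'I_p) :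
  (forall r j, measurable_fun setT (X0 r j)) ->
  (forall r j, measurable_fun setT (X1 r j)) ->
  measurable_fun setT (ALB X0 X1 n m j).
Proof.
move=> mX0 mX1.
have mx r : measurable_fun setT (fun w => feature_data X0 X1 n j w r).
  by rewrite /feature_data; case: (r < n)%N.
exact: measurable_ALB_stat mx n m.
Qed.

Section events.
Context d (T : measurableType d) (R : realType).

Lemma measurable_lt (f g : T -> R) : measurable_fun setT f -> measurable_fun setT g ->
  measurable [set w | f w < g w].
Proof.
move=> mf mg.
have := measurable_fun_ltr mf mg measurableT (Y := [set true]) I.
by rewrite setTI; congr measurable; apply/seteqP; split => w /=.
Qed.

Lemma measurable_imply (C : Prop) (A : set T) : measurable A -> measurable [set w | C -> A w].
Proof.
move=> mA; have [c|nc] := pselect C.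
  by rewrite (_ : [set w | _] = A) //; apply/seteqP; split => w /=; [apply | move=> ? _].
by rewrite (_ : [set w | _] = setT) //; apply/seteqP; split => w //= _ /nc.
Qed.

Lemma measurable_forall_in (I : eqType) (s : seq I) (A : I -> set T) :
  (forall i, measurable (A i)) -> measurable [set w | forall i, i \in s -> A i w].
Proof.
move=> mA; rewrite (_ : [set w | _] = \bigcap_(i in [set` s]) A i).
  by apply: fin_bigcap_measurable => //; exact: finite_seq.
by apply/seteqP; split => w /= h i; apply: h.
Qed.

Lemma measurable_forall (I : finType) (A : I -> set T) :
  (forall i, measurable (A i)) -> measurable [set w | forall i, A i w].
Proof.
move=> mA; rewrite (_ : [set w | _] = \bigcap_i A i).
  by apply: fin_bigcap_measurable => //; exact: finite_finset.
by apply/seteqP; split => w /= h i //; apply: h.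
Qed.

Variable P : probability T R.

Lemma probability_setI_ge (A B : set T) (a b : R) : measurable A -> measurable B ->
  ((1 - a)%:E <= P A)%E -> ((1 - b)%:E <= P B)%E -> ((1 - (a + b))%:E <= P (A `&` B))%E.
Proof.
move=> mA mB.
have finE X : measurable X -> P X = (fine (P X))%:E.
  by move=> mX; rewrite fineK // fin_num_measure.
have mAB := measurableI _ _ mA mB; have mAnB := measurableD mA mB.
have mnB := measurableC mB.
have splitA : fine (P A) = fine (P (A `\` B)) + fine (P (A `&` B)).
  by rewrite (measureDI P mA mB) fineD // fin_num_measure.
have := probability_setC P mB.
have : (P (A `\` B) <= P (~` B))%E by apply: le_measure; rewrite ?inE // => w [].
rewrite (finE _ mA) (finE _ mB) (finE _ mAB) (finE _ mAnB) (finE _ mnB) !lee_fin -EFinB.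
move=> AnB_le [nBE]; lra.
Qed.

Lemma probability_forall_in_ge (I : eqType) (s : seq I) (A : I -> set T) (e : R) :
  (forall i, measurable (A i)) -> (forall i, ((1 - e)%:E <= P (A i))%E) ->
  ((1 - (size s)%:R * e)%:E <= P [set w | forall i, i \in s -> A i w])%E.
Proof.
move=> mA PA; elim: s => [|i s IH].
  rewrite (_ : [set w | _] = setT) ?probability_setT ?mul0r ?subr0 //.
  by apply/seteqP; split => w.
rewrite (_ : [set w | _] = A i `&` [set w | forall j, j \in s -> A j w]); last first.
  apply/seteqP; split => w /=.
    by move=> h; split => [|j js]; apply: h; rewrite inE ?eqxx ?js ?orbT.
  by move=> [Aiw h] j; rewrite inE => /orP [/eqP ->|/h].
rewrite /= -addn1 natrD mulrDl mul1r (addrC _ e).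
by apply: probability_setI_ge => //; exact: measurable_forall_in.
Qed.

Lemma probability_forall_ge (I : finType) (A : I -> set T) (e : R) :
  (forall i, measurable (A i)) -> (forall i, ((1 - e)%:E <= P (A i))%E) ->
  ((1 - #|I|%:R * e)%:E <= P [set w | forall i, A i w])%E.
Proof.
move=> mA PA; have := probability_forall_in_ge (enum I) mA PA.
rewrite -cardE (_ : [set w | _] = [set w | forall i, A i w]) //.
by apply/seteqP; split => w /= h i; [apply: h; rewrite mem_enum | move=> _; apply: h].
Qed.

Lemma tends_to_one_forall (I : finType) (A : I -> nat -> nat -> set T) :
  (forall i n m, measurable (A i n m)) -> (forall i, tends_to_one (fun n m => P (A i n m))) ->
  tends_to_one (fun n m => P [set w | forall i, A i n m w]).
Proof.
move=> mA A1 eps eps_gt0.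
pose e := eps / #|I|.+1%:R.
have e_gt0 : 0 < e by rewrite divr_gt0.
have [N NP] := choice (fun i => A1 i e e_gt0).
exists (\max_i N i)%N => n m Nn Nm.
have card_e : #|I|%:R * e <= eps.
  by rewrite /e mulrA ler_pdivrMr ?ltr0Sn // mulrC ler_pM2l // ler_nat.
have PAnm i : ((1 - e)%:E <= P (A i n m))%E.
  by apply: NP; apply: leq_trans (leq_bigmax i) _.
apply: le_trans (probability_forall_ge (fun i => mA i n m) PAnm); rewrite lee_fin; lra.
Qed.

Lemma tends_to_one_le (A B : nat -> nat -> set T) :
  (forall n m, measurable (A n m)) -> (forall n m, measurable (B n m)) ->
  (forall n m, A n m `<=` B n m) ->
  tends_to_one (fun n m => P (A n m)) -> tends_to_one (fun n m => P (B n m)).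
Proof.
move=> mA mB AB A1 eps eps_gt0; have [N NP] := A1 eps eps_gt0.
exists N => n m Nn Nm.
by apply: le_trans (NP n m Nn Nm) (le_measure _ _ _ (AB n m)); rewrite ?inE.
Qed.

End events.

Theorem theorem1 (R : realType) (d : measure_display) (T : measurableType d)
  (P : probability T R) (p : nat) (X0 X1 : nat -> 'I_p -> T -> R)
  (f g : 'I_p -> R -> R)
  (hX0 : forall r j, measurable_fun setT (X0 r j))
  (hX1 : forall r j, measurable_fun setT (X1 r j))
  (hf : forall j x, 0 <= f j x) (hg : forall j x, 0 <= g j x)
  (hfm : forall j, measurable_fun setT (f j))
  (hgm : forall j, measurable_fun setT (g j))
  (hd0 : forall r j, has_density P (X0 r j) (f j))
  (hd1 : forall r j, has_density P (X1 r j) (g j))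
  (hind : mutually_independent P (all_obs X0 X1))
  (hreg : forall j : 'I_p,
     (~ informative (f j) (g j) ->
        tends_to_one (fun n m => P [set w | ALB X0 X1 n m j w < 0])) /\
     (informative (f j) (g j) ->
        tends_to_one (fun n m => P [set w | 0 < ALB X0 X1 n m j w]))) :
  tends_to_one (fun n m => P [set w | forall i j : 'I_p,
      ~ informative (f i) (g i) -> informative (f j) (g j) ->
      ALB X0 X1 n m i w < ALB X0 X1 n m j w]) /\
  tends_to_one (fun n m => P [set w |
      (forall j : 'I_p, informative (f j) (g j) -> 0 < ALB X0 X1 n m j w) /\
      (forall j : 'I_p, ~ informative (f j) (g j) -> ALB X0 X1 n m j w < 0)]).
Proof.
pose screened j n m := [set w |
  (informative (f j) (g j) -> 0 < ALB X0 X1 n m j w) /\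
  (~ informative (f j) (g j) -> ALB X0 X1 n m j w < 0)].
have mALB n m j := measurable_ALB n m j hX0 hX1.
have m0 : measurable_fun [set: T] (fun=> 0 : R) by exact: measurable_cst.
have m_pos j n m : measurable [set w | 0 < ALB X0 X1 n m j w] := measurable_lt m0 (mALB n m j).
have m_neg j n m : measurable [set w | ALB X0 X1 n m j w < 0] := measurable_lt (mALB n m j) m0.
have m_screened j n m : measurable (screened j n m).
  by apply: measurableI; apply: measurable_imply; [exact: m_pos | exact: m_neg].
have screened_to_one j : tends_to_one (fun n m => P (screened j n m)).
  have [inf|ninf] := pselect (informative (f j) (g j)).
    apply: (tends_to_one_le (m_pos j) (m_screened j) _ ((hreg j).2 inf)).
    by move=> n m w pos; rewrite /screened; split => // /(_ inf).
  apply: (tends_to_one_le (m_neg j) (m_screened j) _ ((hreg j).1 ninf)).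
  by move=> n m w neg; rewrite /screened; split => // /ninf.
have all_screened := tends_to_one_forall m_screened screened_to_one.
have m_all n m : measurable [set w | forall j, screened j n m w] by exact: measurable_forall.
split; apply: (tends_to_one_le m_all _ _ all_screened) => n m.
- apply: measurable_forall => i; apply: measurable_forall => j.
  by do 2 apply: measurable_imply; exact: measurable_lt (mALB n m i) (mALB n m j).
- by move=> w scr i j ni inj; exact: lt_trans ((scr i).2 ni) ((scr j).1 inj).
- by apply: measurableI; apply: measurable_forall => j; apply: measurable_imply;
    [exact: m_pos | exact: m_neg].
- by move=> w scr; split => j; [exact: (scr j).1 | exact: (scr j).2].
Qed.
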